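(* Let $(X_1,Y_1),\dots,(X_{n+1},Y_{n+1})$ be data with risks $L_i=\mathcal{L}(f,X_i,Y_i)\in[0,1]$ (the value $L_{n+1}$ is not used), $s:\mathcal{X}\to[0,1]$ a score, $\alpha,\gamma\in(0,1)$, and $E_{\gamma,n+1}$ as defined below. If $\gamma\le\alpha$, then $$\mathbf{1}\{E_{\gamma,n+1}\ge 1/\alpha\}=\mathbf{1}\Big\{\frac{1+\sum_{i=1}^n L_i\mathbf{1}\{s(X_i)\le s(X_{n+1})\}}{n+1}\le\gamma\Big\}.$$ If $\gamma>\alpha$, then $E_{\gamma,n+1}\ge1/\alpha$ holds if and only if both $\frac{1+\sum_{i=1}^n L_i\mathbf{1}\{s(X_i)\le s(X_{n+1})\}}{n+1}\le\gamma$ and, for all $t\in\mathcal{M}$ and all $\ell\in[0,1]$, $\frac{\ell+\sum_{i=1}^n L_i\mathbf{1}\{s(X_i)\le t\}}{n+1}\notin(\alpha,\gamma]$.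
   Context: Let $\mathcal{M}=\{s(X_i)\}_{i=1}^{n+1}$. For $t\in\mathbb{R}$, $\ell\in[0,1]$, define $F(t;\ell)=\frac{1}{n+1}\big(\sum_{i=1}^n L_i\mathbf{1}\{s(X_i)\le t\}+\ell\,\mathbf{1}\{s(X_{n+1})\le t\}\big)$ and $t_\gamma(\ell)=\max\{t\in\mathcal{M}:F(t;\ell)\le\gamma\}$ with $\max\emptyset=-\infty$. Define $$E_{\gamma,n+1}=\inf_{\ell\in[0,1]}\frac{(n+1)\mathbf{1}\{s(X_{n+1})\le t_\gamma(\ell)\}}{\sum_{i=1}^n L_i\mathbf{1}\{s(X_i)\le t_\gamma(\ell)\}+\ell\,\mathbf{1}\{s(X_{n+1})\le t_\gamma(\ell)\}},$$ where each ratio is $0$ when its numerator is $0$ and $+\infty$ when its numerator is positive and its denominator is $0$; and $E_{\gamma,n+1}=0$ if $\inf_{\ell}t_\gamma(\ell)=-\infty$. *)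

From HB Require Import structures.
From mathcomp Require Import all_boot all_order all_algebra.
From mathcomp Require Import all_classical all_reals ereal.
Set Implicit Arguments. Unset Strict Implicit. Unset Printing Implicit Defensive.
Import Order.TTheory GRing.Theory Num.Theory.
Local Open Scope ring_scope.
Local Open Scope classical_set_scope.

(* Indexing convention: calibration points are 0..n-1 (paper: 1..n),
   the test point is index n (paper: n+1).  S i := s(X_i). *)

Section Econf.
Variables (R : realType) (n : nat) (L : nat -> R) (S : nat -> R).

Definition Fcdf (t : R) (l : R) : R :=
  (\sum_(i < n) L i * ((S i <= t)%R)%:R + l * ((S n <= t)%R)%:R) / n.+1%:R.

(* t_gamma(l) = max { t in M : F(t;l) <= gamma }, max of empty set = -oo *)
Definition tgamma (gamma l : R) : \bar R :=
  \big[Order.max/-oo%E]_(i < n.+1 | Fcdf (S i) l <= gamma) (S i)%:E.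

(* the ratio for a fixed l, with conventions 0/x = 0, positive/0 = +oo *)
Definition eratio (gamma l : R) : \bar R :=
  let t := tgamma gamma l in
  let num : R := n.+1%:R * (((S n)%:E <= t)%E)%:R in
  let den : R := \sum_(i < n) L i * (((S i)%:E <= t)%E)%:R
                 + l * (((S n)%:E <= t)%E)%:R in
  if num == 0 then 0%E else if den == 0 then +oo%E else (num / den)%:E.

Definition Egamma (gamma : R) : \bar R :=
  if ereal_inf [set tgamma gamma l | l in `[0, 1]] == -oo%E then 0%E
  else ereal_inf [set eratio gamma l | l in `[0, 1]].
End Econf.

From HB Require Import structures.
From mathcomp Require Import all_boot all_order all_algebra.
From mathcomp Require Import all_classical all_reals ereal.
Set Implicit Arguments. Unset Strict Implicit. Unset Printing Implicit Defensive.
Import Order.TTheory GRing.Theory Num.Theory.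
Local Open Scope ring_scope.
Local Open Scope classical_set_scope.

(* F(t; l) is nondecreasing in t and in l, so t_gamma(l) is nonincreasing in l with
   infimum t_gamma(1), and s(X_{n+1}) <= t_gamma(1) is exactly p <= gamma.  When
   s(X_{n+1}) <= t_gamma(l) the ratio is 1/F(t_gamma(l); l), otherwise it is 0.
   Hence E >= 1/alpha iff p <= gamma and F(t; l) <= alpha at every t in M with
   F(t; l) <= gamma.  This is vacuous if gamma <= alpha; otherwise it says that F
   takes no value in (alpha, gamma] on M x [0, 1], where points t < s(X_{n+1}) are
   reduced to t = s(X_{n+1}) by monotonicity. *)

Section Econf_facts.
Variables (R : realType) (n : nat) (L S : nat -> R).
Hypothesis L_ge0 : forall i, (i < n)%N -> 0 <= L i.

Local Notation F := (Fcdf n L S).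
Local Notation tg := (tgamma n L S).

(* F(t; l) with the test point always counted, as in the second condition of the theorem. *)
Definition Fcdf_incl (t l : R) : R :=
  (l + \sum_(i < n) L i * ((S i <= t)%R)%:R) / n.+1%:R.

Lemma Fcdf_inclE t l : S n <= t -> F t l = Fcdf_incl t l.
Proof. by move=> le_nt; rewrite /Fcdf /Fcdf_incl le_nt mulr1 addrC. Qed.

Lemma le_calib_sum t t' : t <= t' ->
  \sum_(i < n) L i * ((S i <= t)%R)%:R <= \sum_(i < n) L i * ((S i <= t')%R)%:R.
Proof.
move=> le_tt'; apply: ler_sum => i _; apply: ler_wpM2l; first exact: L_ge0.
by case: (leP (S i) t) => [/le_trans/(_ le_tt') ->|]; rewrite ?ler0n.
Qed.

Lemma le_Fcdf_t t t' l : 0 <= l -> t <= t' -> F t l <= F t' l.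
Proof.
move=> l_ge0 le_tt'; rewrite /Fcdf ler_pM2r ?invr_gt0 ?ltr0n //.
rewrite lerD ?le_calib_sum // ler_wpM2l // ler_nat.
by case: (leP (S n) t) => [/le_trans/(_ le_tt') ->|].
Qed.

Lemma le_Fcdf_l t l l' : l <= l' -> F t l <= F t l'.
Proof.
move=> le_ll'; rewrite /Fcdf ler_pM2r ?invr_gt0 ?ltr0n // lerD2l.
by rewrite ler_wpM2r ?ler0n.
Qed.

Lemma le_Fcdf_incl_t t t' l : t <= t' -> Fcdf_incl t l <= Fcdf_incl t' l.
Proof.
by move=> le_tt'; rewrite ler_pM2r ?invr_gt0 ?ltr0n // lerD2l le_calib_sum.
Qed.

Variant tgamma_spec (g l : R) : \bar R -> Prop :=
  | TgammaNone : tgamma_spec g l -oo%E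
  | TgammaSome j of (j <= n)%N & F (S j) l <= g : tgamma_spec g l (S j)%:E.

Lemma tgammaP g l : tgamma_spec g l (tg g l).
Proof.
rewrite /tgamma; apply: big_ind => [|x y x_spec y_spec|i]; first exact: TgammaNone.
  by rewrite /Order.max; case: ifP.
by apply: TgammaSome; rewrite -ltnS.
Qed.

Lemma le_tgamma g l j : 0 <= l -> (j <= n)%N ->
  ((S j)%:E <= tg g l)%E = (F (S j) l <= g).
Proof.
move=> l_ge0 le_jn; apply/idP/idP => [|le_Fg].
  case: tgammaP => [|k _ le_Fk_g]; rewrite ?leeNy_eq // lee_fin => le_jk.
  exact: le_trans (le_Fcdf_t l_ge0 le_jk) le_Fk_g.
rewrite -ltnS in le_jn.
by apply: (@le_bigmax_cond _ _ _ _ (Ordinal le_jn)).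
Qed.

Lemma le_tgamma_l g l l' : 0 <= l -> l <= l' -> (tg g l' <= tg g l)%E.
Proof.
move=> l_ge0 le_ll'; case: (tgammaP g l') => [|j le_jn le_Fg]; first exact: leNye.
by rewrite le_tgamma //; apply: le_trans (le_Fcdf_l _ le_ll') le_Fg.
Qed.

Lemma ereal_inf_tgamma g :
  ereal_inf [set tg g l | l in `[0, 1]] = tg g 1.
Proof.
apply/le_anti/andP; split.
  by apply: ereal_inf_lbound; exists 1; rewrite //= in_itv /= ler01 lexx.
by apply/ereal_infP => _ [l /= /[!in_itv] /= /andP[l_ge0 l_le1] <-]; apply: le_tgamma_l.
Qed.

Lemma inv_le_eratio g l a : 0 <= l -> 0 < a ->
  ((a^-1)%:E <= eratio n L S g l)%E <->
  exists2 t, tg g l = t%:E & S n <= t /\ F t l <= a.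
Proof.
move=> l_ge0 a_gt0; have ainv_gt0 : 0 < a^-1 by rewrite invr_gt0.
rewrite /eratio; case: tgammaP => [|j _ _] /=.
  by rewrite mulr0 eqxx lee_fin leNgt ainv_gt0; split=> // -[].
rewrite lee_fin; case: (leP (S n) (S j)) => [le_nj|lt_jn] /=; last first.
  rewrite mulr0 eqxx lee_fin leNgt ainv_gt0; split=> // -[_ [<-] []].
  by rewrite leNgt lt_jn.
have den : \sum_(i < n) L i * (((S i)%:E <= (S j)%:E)%E)%:R + l * 1
           = n.+1%:R * F (S j) l.
  rewrite /Fcdf le_nj mulrCA mulfV ?pnatr_eq0 // !mulr1.
  by congr (_ + _); apply: eq_bigr => i _; rewrite lee_fin.
have F_ge0 : 0 <= F (S j) l.
  rewrite divr_ge0 ?ler0n // addr_ge0 ?mulr_ge0 ?ler0n //.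
  by apply: sumr_ge0 => i _; rewrite mulr_ge0 ?ler0n ?L_ge0.
rewrite mulr1 pnatr_eq0 den mulf_eq0 pnatr_eq0 /=.
have [F0|F_neq0] := eqVneq (F (S j) l) 0.
  split=> [_|_]; last exact: leey.
  by exists (S j) => //; rewrite F0 (ltW a_gt0).
have F_gt0 : 0 < F (S j) l by rewrite lt_def F_neq0.
rewrite invfM mulrA mulfV ?pnatr_eq0 // mul1r lee_fin lef_pV2 ?posrE //.
by split=> [le_Fa|[_ [<-] []]//]; exists (S j).
Qed.

Lemma inv_le_Egamma g a : 0 < a ->
  ((a^-1)%:E <= Egamma n L S g)%E <->
  F (S n) 1 <= g /\
  forall l, 0 <= l <= 1 -> forall j, (j <= n)%N -> F (S j) l <= g -> F (S j) l <= a.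
Proof.
move=> a_gt0; rewrite /Egamma ereal_inf_tgamma -le_tgamma ?ler01 //.
case: eqP => [->|_].
  by rewrite lee_fin leNgt invr_gt0 a_gt0 leeNy_eq; split=> // -[].
split=> [/ereal_infP inv_le|[le_n1 le_Fa]].
  have {}inv_le l : 0 <= l <= 1 -> exists2 t, tg g l = t%:E & S n <= t /\ F t l <= a.
    case/andP=> l_ge0 l_le1; apply/(inv_le_eratio g l_ge0 a_gt0)/inv_le.
    by exists l; rewrite //= in_itv /= l_ge0.
  split=> [|l l01 j le_jn le_Fg].
    have [|t -> [le_nt _]] := inv_le 1; first by rewrite ler01 /=.
    by rewrite lee_fin.
  have [l_ge0 _] := andP l01; have [t tg_t [_ le_Fta]] := inv_le l l01.
  have : ((S j)%:E <= tg g l)%E by rewrite le_tgamma.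
  by rewrite tg_t lee_fin => /(le_Fcdf_t l_ge0)/le_trans; apply.
apply/ereal_infP => _ [l /= /[!in_itv] /= /andP[l_ge0 l_le1] <-].
apply/(inv_le_eratio g l_ge0 a_gt0).
have := le_trans le_n1 (le_tgamma_l g l_ge0 l_le1).
case: tgammaP => [|j le_jn le_Fg]; rewrite ?leeNy_eq // lee_fin => le_nj.
by exists (S j) => //; split=> //; apply: le_Fa; rewrite ?l_ge0.
Qed.

Lemma Fcdf_gapP g a : F (S n) 1 <= g ->
  (forall l, 0 <= l <= 1 -> forall j, (j <= n)%N -> F (S j) l <= g -> F (S j) l <= a)
  <->
  (forall t, (exists2 i, (i <= n)%N & t = S i) ->
   forall l, 0 <= l <= 1 -> ~ (a < Fcdf_incl t l <= g)).
Proof.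
move=> le_n1g; have le_nlg l : l <= 1 -> F (S n) l <= g.
  by move=> l_le1; apply: le_trans (le_Fcdf_l _ l_le1) le_n1g.
split=> [le_Fa t [k le_kn ->] l l01 /andP[lt_aF le_Fg]|no_gap l l01 j le_jn le_Fg].
  have [l_ge0 l_le1] := andP l01.
  suff : Fcdf_incl (S k) l <= a by rewrite leNgt lt_aF.
  case: (leP (S n) (S k)) => [le_nk|lt_kn].
    by rewrite -Fcdf_inclE // in le_Fg *; apply: le_Fa.
  apply: le_trans (le_Fcdf_incl_t l (ltW lt_kn)) _.
  by rewrite -Fcdf_inclE // le_Fa ?le_nlg.
have [l_ge0 l_le1] := andP l01.
have gap_above i : (i <= n)%N -> S n <= S i -> F (S i) l <= g -> F (S i) l <= a.
  move=> le_in le_ni le_Fig; rewrite leNgt; apply/negP => lt_aF.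
  by apply: (no_gap (S i) (ex_intro2 _ _ i le_in erefl) l l01); rewrite -Fcdf_inclE ?lt_aF.
case: (leP (S n) (S j)) => [le_nj|lt_jn]; first exact: gap_above.
apply: le_trans (le_Fcdf_t l_ge0 (ltW lt_jn)) _.
by apply: gap_above => //; apply: le_nlg.
Qed.

End Econf_facts.

Theorem proposition4p1 (R : realType) (T : Type) (n : nat)
  (X : nat -> T) (L : nat -> R) (s : T -> R) (alpha gamma : R) :
  (forall i, (i < n)%N -> 0 <= L i <= 1) ->
  (forall x, 0 <= s x <= 1) ->
  0 < alpha < 1 -> 0 < gamma < 1 ->
  let S := fun i => s (X i) in
  let p := (1 + \sum_(i < n) L i * ((S i <= S n)%R)%:R) / n.+1%:R in
  (gamma <= alpha ->
     ((Egamma n L S gamma >= (alpha^-1)%:E)%E = (p <= gamma))) /\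
  (alpha < gamma ->
     ((Egamma n L S gamma >= (alpha^-1)%:E)%E <->
      (p <= gamma /\
       forall t, (exists2 i, (i <= n)%N & t = S i) ->
       forall l, 0 <= l <= 1 ->
         ~ (alpha < (l + \sum_(i < n) L i * ((S i <= t)%R)%:R) / n.+1%:R <= gamma)))).
Proof.
move=> L01 _ /andP[alpha_gt0 _] _ S p.
have L_ge0 i : (i < n)%N -> 0 <= L i by case/L01/andP.
have -> : p = Fcdf n L S (S n) 1 by rewrite Fcdf_inclE.
have Egamma_ge := inv_le_Egamma S L_ge0 gamma alpha_gt0.
split=> [le_ga|_].
  apply/idP/idP => [/Egamma_ge[]//|le_pg].
  by apply/Egamma_ge; split=> // l _ j _ /le_trans; apply.
rewrite Egamma_ge; split=> -[le_pg gap]; split=> //.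
all: have gapE := Fcdf_gapP L_ge0 alpha le_pg; rewrite /Fcdf_incl in gapE.
all: exact/gapE.
Qed.
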